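(* Let $\mathcal G=(\mathcal V,\mathcal E)$ be a hypergraph with $\mathcal V=[n]$, all of whose edges are nonempty, with set of special vertices $\mathcal V^{\mathrm{sp}}\subseteq\mathcal V$. Then for every $q\in\mathbb Z$ we have, as formal power series in $\mathbb Q[[x_1,\dots,x_n]]$, \[ I^{\mathrm{mark}}(\mathcal G,x)^q=\sum_{\mathbf m\in\mathbb Z_{\ge0}^n}{}_{\mathbf m}\Pi^{\mathrm{mark}}_{\mathcal G}(q)\,x^{\mathbf m}, \] where ${}_{\mathbf m}\Pi^{\mathrm{mark}}_{\mathcal G}$ denotes the unique polynomial in $q$ whose value at each positive integer $q$ is the number of marked multi-colorings of $\mathcal G$ associated to $\mathbf m$ using at most $q$ colors (for $\mathbf m=\mathbf 0$ this polynomial is the constant $1$).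
   Context: A hypergraph $\mathcal G=(\mathcal V,\mathcal E)$ has vertex set $\mathcal V=[n]=\{1,\dots,n\}$ and edge set $\mathcal E$ a collection of subsets of $[n]$; $\mathcal V^{\mathrm{sp}}\subseteq\mathcal V$ is a fixed set of special vertices. A finite multiset $U$ with elements in $\mathcal V$ is marked-independent if its underlying set contains no edge $e\in\mathcal E$ and every vertex of $\mathcal V\setminus\mathcal V^{\mathrm{sp}}$ occurs at most once in $U$ (the empty multiset is marked-independent). For such $U$, $x(U)=\prod_v x_v^{r_v}$ where $v$ occurs $r_v$ times in $U$. The marked independence series is $I^{\mathrm{mark}}(\mathcal G,x)=\sum_U x(U)$, summed over all marked-independent multisets $U$; it has constant term $1$. For $\mathbf m=(m_v)\in\mathbb Z_{\ge0}^n$ and $q\in\mathbb N$, a marked multi-coloring of $\mathcal G$ associated to $\mathbf m$ using at most $q$ colors is a map $\Gamma$ assigning to each $v$ a finite multiset $\Gamma(v)$ with elements in $\{1,\dots,q\}$ such that $\Gamma(v)$ is a set for $v\notin\mathcal V^{\mathrm{sp}}$, $|\Gamma(v)|=m_v$ (with multiplicity), and for every $e\in\mathcal E$ the underlying sets of $\Gamma(v)$, $v\in e$, have empty common intersection; two colorings are distinct if they differ at some vertex. $x^{\mathbf m}=\prod_v x_v^{m_v}$. *)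

From mathcomp Require Import all_boot all_order all_algebra.
Set Implicit Arguments. Unset Strict Implicit. Unset Printing Implicit Defensive.
Import Order.TTheory GRing.Theory Num.Theory.
Local Open Scope ring_scope.

(* Vertices are 'I_n (i.e. {0,...,n-1}, standing for [n]).
   A multi-index m in Z_{>=0}^n is a finite function 'I_n -> nat.
   A formal power series in Q[[x_1..x_n]] is its coefficient function. *)
Definition midx (n : nat) := {ffun 'I_n -> nat}.
Definition series (n : nat) := midx n -> rat.

(* max entry of a multi-index, used to bound finite enumerations *)
Definition mbnd n (m : midx n) : nat := (\max_(i < n) m i)%N.
Definition mdeg n (m : midx n) : nat := (\sum_(i < n) m i)%N.

Definition mzero n (m : midx n) : bool := [forall i, m i == 0%N].

Definition sone n : series n := fun m => if mzero m then 1 else 0.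

Definition smul n (f g : series n) : series n := fun m =>
  \sum_(a : {ffun 'I_n -> 'I_(mbnd m).+1} | [forall i, (a i <= m i)%N])
     f [ffun i => (a i : nat)] * g [ffun i => (m i - a i)%N].

Definition spow n (f : series n) (k : nat) : series n := iter k (smul f) (@sone n).

(* inverse of a series with constant term 1: f^{-1} = sum_k (1-f)^k,
   where the coefficient at m only involves k <= |m| *)
Definition sinv n (f : series n) : series n := fun m =>
  \sum_(k < (mdeg m).+1) spow (fun a => sone a - f a) k m.

Definition sipow n (f : series n) (q : int) : series n :=
  match q with
  | Posz k => spow f k
  | Negz k => spow (sinv f) k.+1
  end.

Definition marked_indep n (E : {set {set 'I_n}}) (Vsp : {set 'I_n}) (m : midx n) : bool :=
  [forall e in E, ~~ (e \subset [set v | (0 < m v)%N])] &&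
  [forall v, (v \notin Vsp) ==> (m v <= 1)%N].

(* marked independence series: each marked-independent multiset U contributes
   x(U) = x^m, and U is determined by its multiplicity vector m *)
Definition Imark n (E : {set {set 'I_n}}) (Vsp : {set 'I_n}) : series n :=
  fun m => if marked_indep E Vsp m then 1 else 0.

(* A marked multi-coloring associated to m with at most q colors (colors are 'I_q):
   Gamma v c = multiplicity of color c in the multiset Gamma(v).  Multiplicities
   are bounded by m v <= mbnd m, so the finite type below contains them all. *)
Definition is_marked_coloring n (E : {set {set 'I_n}}) (Vsp : {set 'I_n})
  (m : midx n) (q : nat) (G : {ffun 'I_n -> {ffun 'I_q -> 'I_(mbnd m).+1}}) : bool :=
  [forall v, (\sum_(c < q) (G v c : nat))%N == m v] &&
  [forall v, (v \notin Vsp) ==> [forall c, (G v c <= 1)%N]] &&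
  [forall e in E, ~~ [exists c : 'I_q, [forall v in e, (0 < G v c)%N]]].

Definition n_marked_colorings n (E : {set {set 'I_n}}) (Vsp : {set 'I_n})
  (m : midx n) (q : nat) : nat :=
  #|[set G | @is_marked_coloring n E Vsp m q G]|.

(* For q >= 0 the coefficient of x^m in I^q counts q-tuples of marked-independent
   multisets with multiplicities summing to m; reading them as color classes gives
   exactly the marked multi-colorings with q colors.  Since the edges are nonempty,
   I = 1 - g where g has no constant term, so g^j has no monomial of total degree
   below j.  Hence, with c_j the coefficient of x^m in g^j and N = |m| + 1,
     [x^m] I^q = sum_(j < N) (-1)^j C(q, j) c_j,
     [x^m] I^(-l-1) = [x^m] (sum_(j < N) g^j)^(l+1) = sum_(j < N) C(l + j, j) c_j,
   and both are the values of P = sum_(j < N) (-1)^j c_j binom(X, j), as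
   binom(-l-1, j) = (-1)^j C(l + j, j).  The series are compared through their
   truncations to multivariate polynomials, which respect products below x^m. *)

From Pilot Require Import Defs.
From mathcomp Require Import all_boot all_order all_algebra.
From mathcomp Require Import mpoly.
From mathcomp Require Import ring.
Import GRing.Theory Num.Theory.
Set Implicit Arguments. Unset Strict Implicit. Unset Printing Implicit Defensive.
Local Open Scope ring_scope.

Definition box_val n K (a : {ffun 'I_n -> 'I_K}) : midx n := [ffun i => (a i : nat)].
Definition mnm_of n (a : midx n) : 'X_{1..n} := [multinom a i | i < n].
Definition midx_of n (k : 'X_{1..n}) : midx n := [ffun i => k i].
Definition mnm_le n (m : midx n) (k : 'X_{1..n}) := forall i, (k i <= m i)%N.

Lemma mnm_ofK n : cancel (@mnm_of n) (@midx_of n).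
Proof. by move=> a; apply/ffunP => i; rewrite ffunE mnmE. Qed.

Lemma midx_ofK n : cancel (@midx_of n) (@mnm_of n).
Proof. by move=> k; apply/mnmP => i; rewrite mnmE ffunE. Qed.

Lemma ltn_mbnd n (m : midx n) i : (m i < (mbnd m).+1)%N.
Proof. by rewrite ltnS; apply: (@leq_bigmax _ (fun i => m i)). Qed.

Lemma mnm_le_mnm_of n (m : midx n) : mnm_le m (mnm_of m).
Proof. by move=> i; rewrite mnmE. Qed.

Lemma inord_inordK K1 K2 (x : 'I_K2.+1) :
  (inord (inord x : 'I_K1.+1) : 'I_K2.+1) = x -> ((inord x : 'I_K1.+1) : nat) = x.
Proof.
move=> e; case: (leqP x K1) => h; first by rewrite inordK.
have x0 : (inord x : 'I_K1.+1) = ord0.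
  by apply/val_inj; rewrite /= /inord /insubd insubF //= ltnS leqNgt h.
by move: e h; rewrite x0 => <-; rewrite /= inordK.
Qed.

(* [smul] sums over a box whose size depends on the index; any box containing
   the index gives the same sum. *)
Lemma sum_box_le_indep n (F : midx n -> rat) (c : midx n) K1 K2 :
  (forall i, c i < K1.+1)%N -> (forall i, c i < K2.+1)%N ->
  \sum_(a : {ffun 'I_n -> 'I_K1.+1} | [forall i, (a i <= c i)%N]) F (box_val a) =
  \sum_(a : {ffun 'I_n -> 'I_K2.+1} | [forall i, (a i <= c i)%N]) F (box_val a).
Proof.
move=> c1 c2.
pose resize K K' (a : {ffun 'I_n -> 'I_K.+1}) : {ffun 'I_n -> 'I_K'.+1} :=
  [ffun i => inord (a i)].
rewrite (reindex_onto (resize K2 K1) (resize K1 K2)) => [|a /forallP ac]; last first.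
  apply/ffunP => i; apply/val_inj; rewrite !ffunE /=.
  by rewrite (@inordK K2 (a i)) ?inordK // (leq_ltn_trans (ac i)).
apply: eq_big => [b|b /andP[_ /eqP bK]]; last first.
  congr F; apply/ffunP => i; rewrite !ffunE.
  by move/ffunP: bK => /(_ i); rewrite !ffunE => /inord_inordK.
apply/andP/forallP => [[/forallP bc /eqP bK] i|bc].
  move/ffunP: bK => /(_ i); rewrite !ffunE => /inord_inordK bi.
  by have := bc i; rewrite ffunE bi.
have bi i : ((inord (b i) : 'I_K1.+1) : nat) = b i.
  by rewrite inordK // (leq_ltn_trans (bc i)).
split; first by apply/forallP => i; rewrite ffunE bi.
by apply/eqP/ffunP => i; apply/val_inj; rewrite !ffunE /= bi inordK.
Qed.

Lemma spow_eq0_lt_mdeg n (g : series n) : (forall z, mzero z -> g z = 0) ->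
  forall j (b : midx n), (Defs.mdeg b < j)%N -> spow g j b = 0.
Proof.
move=> g0; elim=> [|j IH] b // bj.
rewrite /spow iterS -/(spow g j) /smul; apply: big1 => a /forallP ab.
case: (boolP (mzero (box_val a))) => [az|anz]; first by rewrite g0 ?mul0r.
rewrite IH ?mulr0 //.
have mdegD : (Defs.mdeg [ffun i => (b i - a i)%N] + Defs.mdeg (box_val a))%N = Defs.mdeg b.
  rewrite /Defs.mdeg -big_split; apply: eq_bigr => i _.
  by rewrite !ffunE /= subnK.
have a_gt0 : (0 < Defs.mdeg (box_val a))%N.
  case/forallPn: anz => i; rewrite -lt0n => ai.
  by rewrite /Defs.mdeg (bigD1 i) //= (leq_trans ai) ?leq_addr.
by rewrite -ltnS (leq_trans _ bj) // -mdegD ltnS -addn1 leq_add2l.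
Qed.

Section Truncation.
Variables (n : nat) (m : midx n).

(* The box [0, mbnd m]^n contains every exponent below [m], which is all that
   the coefficients of the Cauchy product at indices below [m] see. *)
Definition trunc (f : series n) : {mpoly rat[n]} :=
  \sum_(a : {ffun 'I_n -> 'I_(mbnd m).+1}) f (box_val a) *: 'X_[mnm_of (box_val a)].

Definition eq_upto (p r : {mpoly rat[n]}) := forall k, mnm_le m k -> p@_k = r@_k.

Lemma mcoeff_trunc f k : mnm_le m k -> (trunc f)@_k = f (midx_of k).
Proof.
move=> km; have ki i : (k i < (mbnd m).+1)%N := leq_ltn_trans (km i) (ltn_mbnd m i).
pose a0 : {ffun 'I_n -> 'I_(mbnd m).+1} := [ffun i => inord (k i)].
have a0k : box_val a0 = midx_of k by apply/ffunP => i; rewrite !ffunE inordK.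
rewrite raddf_sum (bigD1 a0) //= big1 ?addr0 => [|a a_a0].
  by rewrite mcoeffZ mcoeffX a0k midx_ofK eqxx mulr1.
rewrite mcoeffZ mcoeffX; case: eqP => [ak|]; last by rewrite mulr0.
case/eqP: a_a0; apply/ffunP => i; apply/val_inj.
by rewrite ffunE /= inordK // -ak mnmE ffunE.
Qed.

Lemma eq_upto_trans p r s : eq_upto p r -> eq_upto r s -> eq_upto p s.
Proof. by move=> pr rs k km; rewrite pr // rs. Qed.

Lemma eq_uptoM p p' r r' : eq_upto p p' -> eq_upto r r' -> eq_upto (p * r) (p' * r').
Proof.
move=> pp rr k km; rewrite !mcoeffM; apply: eq_bigr => x /eqP/mnmP kx.
have le1 : mnm_le m x.1.
  by move=> i; apply: leq_trans (km i); rewrite kx mnmDE leq_addr.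
have le2 : mnm_le m x.2.
  by move=> i; apply: leq_trans (km i); rewrite kx mnmDE leq_addl.
by rewrite pp // rr.
Qed.

Lemma eq_uptoX p r j : eq_upto p r -> eq_upto (p ^+ j) (r ^+ j).
Proof. by move=> pr; elim: j => [|j IH]; rewrite ?expr0 // !exprS; apply: eq_uptoM. Qed.

Lemma eq_upto_trunc p f :
  (forall k, mnm_le m k -> p@_k = f (midx_of k)) -> eq_upto (trunc f) p.
Proof. by move=> pf k km; rewrite mcoeff_trunc // pf. Qed.

Lemma mnm_of_box_addE K (a b : {ffun 'I_n -> 'I_K}) (k : 'X_{1..n}) :
  (mnm_of (box_val a) + mnm_of (box_val b) == k)%MM = [forall i, (a i + b i == k i)%N].
Proof.
apply/eqP/forallP => [<- i|abk]; first by rewrite mnmDE !mnmE !ffunE.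
by apply/mnmP => i; rewrite mnmDE !mnmE !ffunE; apply/eqP.
Qed.

Lemma trunc_smul f g : eq_upto (trunc (smul f g)) (trunc f * trunc g).
Proof.
apply: eq_upto_trunc => k km.
have ki i : (k i < (mbnd m).+1)%N := leq_ltn_trans (km i) (ltn_mbnd m i).
pose F a := f a * g [ffun i => (midx_of k i - a i)%N].
have -> : trunc f * trunc g = \sum_(a : {ffun 'I_n -> 'I_(mbnd m).+1})
    \sum_(b : {ffun 'I_n -> 'I_(mbnd m).+1})
      (f (box_val a) * g (box_val b)) *: 'X_[mnm_of (box_val a) + mnm_of (box_val b)].
  rewrite mulr_suml; apply: eq_bigr => a _; rewrite mulr_sumr; apply: eq_bigr => b _.
  by rewrite mpolyXD -scalerAl -scalerAr scalerA.
transitivity (\sum_(a : {ffun 'I_n -> 'I_(mbnd m).+1} | [forall i, (a i <= midx_of k i)%N])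
                F (box_val a)); last first.
  rewrite /smul -(@sum_box_le_indep _ F _ (mbnd (midx_of k))) => [|i|i]; last 2 first.
  - exact: ltn_mbnd.
  - by rewrite ffunE.
  by apply: eq_bigr => a _; congr (_ * g _); apply/ffunP => i; rewrite !ffunE.
rewrite raddf_sum [RHS]big_mkcond /=; apply: eq_bigr => a _; rewrite raddf_sum /=.
case: ifP => [/forallP ak|/negbT ak]; last first.
  apply: big1 => b _; rewrite mcoeffZ mcoeffX mnm_of_box_addE.
  case: forallP => [abk|]; last by rewrite mulr0.
  case/negP: ak; apply/forallP => i; rewrite ffunE -(eqP (abk i)); exact: leq_addr.
pose b0 : {ffun 'I_n -> 'I_(mbnd m).+1} := [ffun i => inord (k i - a i)].
have b0E i : (b0 i : nat) = (k i - a i)%N.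
  by rewrite ffunE inordK // (leq_ltn_trans _ (ki i)) ?leq_subr.
rewrite (bigD1 b0) //= big1 ?addr0 => [|b b_b0].
  rewrite mcoeffZ mcoeffX mnm_of_box_addE.
  have -> : [forall i, (a i + b0 i == k i)%N].
    by apply/forallP => i; rewrite b0E subnKC //; have := ak i; rewrite ffunE.
  rewrite mulr1 /F; congr (_ * g _); apply/ffunP => i.
  by rewrite [box_val b0 i]ffunE b0E !ffunE.
rewrite mcoeffZ mcoeffX mnm_of_box_addE; case: forallP => [abk|]; last by rewrite mulr0.
case/eqP: b_b0; apply/ffunP => i; apply/val_inj.
by rewrite /= b0E -(eqP (abk i)) addKn.
Qed.

Lemma trunc_sone : eq_upto (trunc (@sone n)) 1.
Proof.
move=> k km; rewrite mcoeff_trunc // mcoeff1 /sone.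
have -> : mzero (midx_of k) = (k == 0%MM).
  apply/forallP/eqP => [k0|->]; last by move=> i; rewrite ffunE mnm0E.
  by apply/mnmP => i; rewrite mnm0E; move/eqP: (k0 i); rewrite ffunE.
by case: (k == 0%MM).
Qed.

Lemma trunc_spow f j : eq_upto (trunc (spow f j)) (trunc f ^+ j).
Proof.
elim: j => [|j IH]; first exact: trunc_sone.
rewrite exprS /spow iterS -/(spow f j).
by apply: eq_upto_trans (trunc_smul _ _) _; apply: eq_uptoM.
Qed.

Lemma spow_coef_trunc f j : spow f j m = (trunc f ^+ j)@_(mnm_of m).
Proof.
by rewrite -trunc_spow ?mcoeff_trunc ?mnm_ofK //; exact: mnm_le_mnm_of.
Qed.

End Truncation.

Lemma sumr_ord_widen0 (V : nmodType) (F : nat -> V) s M : (s <= M)%N ->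
  (forall i, (s <= i < M)%N -> F i = 0) -> \sum_(i < s) F i = \sum_(i < M) F i.
Proof.
move=> sM F0; rewrite (big_ord_widen _ _ sM) [RHS](bigID (fun i : 'I_M => i < s)%N) /=.
rewrite [X in _ = _ + X]big1 ?addr0 // => i; rewrite -leqNgt => si.
by rewrite F0 // si ltn_ord.
Qed.

Lemma hockey_stick (l i : nat) : (\sum_(j < i.+1) 'C(l + j, j))%N = 'C(l.+1 + i, i).
Proof.
elim: i => [|i IH]; first by rewrite big_ord1 !addn0 !bin0.
rewrite big_ord_recr /= IH.
have -> : (l.+1 + i.+1 = (l + i.+1).+1)%N by rewrite addSn.
by rewrite binS addnC addSn addnS.
Qed.

Lemma coef_1subX_exp (R : comNzRingType) (q i : nat) :
  ((1 - 'X : {poly R}) ^+ q)`_i = (-1) ^+ i * 'C(q, i)%:R.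
Proof.
elim: q i => [|q IH] [|i].
- by rewrite expr0 coef1 mulr1.
- by rewrite expr0 coef1 bin0n mulr0.
- by rewrite exprS mulrBl mul1r coefB coefXM IH !bin0 subr0.
by rewrite exprS mulrBl mul1r coefB coefXM !IH /= binS natrD exprS; ring.
Qed.

Section GeometricPoly.
Variables (R : comNzRingType) (N : nat).

Definition geom_poly : {poly R} := \sum_(j < N) 'X^j.

Lemma coef_geom_poly i : geom_poly`_i = (i < N)%:R.
Proof.
rewrite coef_sum; case: (ltnP i N) => iN.
  rewrite (bigD1 (Ordinal iN)) //= coefXn eqxx big1 ?addr0 // => j ji.
  by rewrite coefXn; case: eqP => // ij; case/eqP: ji; apply/val_inj.
apply: big1 => j _; rewrite coefXn; case: eqP => // ij.
by move: (ltn_ord j); rewrite -ij ltnNge iN.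
Qed.

Lemma coef_geom_poly_exp l i : (i < N)%N -> (geom_poly ^+ l.+1)`_i = 'C(l + i, i)%:R.
Proof.
elim: l i => [|l IH] i iN; first by rewrite expr1 coef_geom_poly iN binn.
rewrite exprSr coefM (eq_bigr (fun j : 'I_i.+1 => ('C(l + j, j))%:R)).
  by rewrite -natr_sum hockey_stick.
move=> j _; rewrite IH ?(leq_ltn_trans (leq_ord j)) //.
by rewrite coef_geom_poly (leq_ltn_trans _ iN) ?leq_subr // mulr1.
Qed.

End GeometricPoly.

Arguments geom_poly {R} N.

Section BinomialPoly.
Variable R : numFieldType.

Definition binpoly (j : nat) : {poly R} := (j`!%:R)^-1 *: \prod_(i < j) ('X - (i%:R)%:P).

Lemma horner_binpoly j x : (binpoly j).[x] = (j`!%:R)^-1 * \prod_(i < j) (x - i%:R).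
Proof.
rewrite hornerZ horner_prod; congr (_ * _).
by apply: eq_bigr => i _; rewrite hornerXsubC.
Qed.

Lemma fact_natr_neq0 j : (j`!%:R : R) != 0.
Proof. by rewrite pnatr_eq0 -lt0n fact_gt0. Qed.

Lemma binpoly_nat q j : (binpoly j).[q%:R] = 'C(q, j)%:R.
Proof.
rewrite horner_binpoly.
have -> : \prod_(i < j) (q%:R - i%:R : R) = ('C(q, j) * j`!)%:R.
  elim: j => [|j IH]; first by rewrite big_ord0 bin0 fact0.
  rewrite big_ord_recr /= IH factS; case: (leqP j q) => jq.
    rewrite -natrB // -natrM; congr (_%:R).
    by rewrite mulnA (mulnC _ j.+1) mul_bin_left [LHS]mulnC mulnA.
  by rewrite !bin_small ?mul0n ?mul0r // ltnW.
by rewrite natrM mulrC -mulrA divff ?mulr1 // fact_natr_neq0.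
Qed.

Lemma binpoly_neg l j : (binpoly j).[- (l.+1)%:R] = (-1) ^+ j * 'C(l + j, j)%:R.
Proof.
rewrite horner_binpoly.
have -> : \prod_(i < j) (- (l.+1)%:R - i%:R : R) = (-1) ^+ j * ('C(l + j, j) * j`!)%:R.
  elim: j => [|j IH]; first by rewrite big_ord0 bin0 fact0 expr0 mul1r.
  rewrite big_ord_recr /= IH factS.
  have -> : ('C(l + j.+1, j.+1) * (j.+1 * j`!) = (l + j).+1 * 'C(l + j, j) * j`!)%N.
    by rewrite mulnA (mulnC _ j.+1) -mul_bin_diag addnS.
  rewrite !natrM exprS -addnS !natrD; ring.
have := fact_natr_neq0 j; rewrite natrM => j0; field => //.
Qed.

End BinomialPoly.

Arguments binpoly {R} j.

Lemma horner_algE n (G : {mpoly rat[n]}) p :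
  horner_alg G p = \sum_(i < size p) p`_i *: G ^+ i.
Proof.
rewrite -{1}(coefK p) poly_def linear_sum; apply: eq_bigr => i _.
by rewrite -mul_polyC rmorphM /= horner_algC rmorphXn /= horner_algX -scalerAl mul1r.
Qed.

Lemma prod_scaleX n I (r : seq I) (a : I -> rat) (e : I -> 'X_{1..n}) :
  \prod_(i <- r) (a i *: 'X_[e i] : {mpoly rat[n]}) =
  (\prod_(i <- r) a i) *: 'X_[(\sum_(i <- r) e i)%MM].
Proof.
elim: r => [|x r IH]; first by rewrite !big_nil mpolyX0 scale1r.
by rewrite !big_cons IH mpolyXD -scalerAl -scalerAr scalerA.
Qed.

Section Colorings.
Variables (n : nat) (E : {set {set 'I_n}}) (Vsp : {set 'I_n}) (m : midx n) (q : nat).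
Let K := (mbnd m).+1.

(* A coloring, read color by color, is a q-tuple of marked-independent
   multisets (the vertices carrying each color) whose multiplicities add up to m. *)
Definition coloring_of (h : {ffun 'I_q -> {ffun 'I_n -> 'I_K}}) :
  {ffun 'I_n -> {ffun 'I_q -> 'I_K}} := [ffun v => [ffun c => h c v]].

Definition color_classes (G : {ffun 'I_n -> {ffun 'I_q -> 'I_K}}) :
  {ffun 'I_q -> {ffun 'I_n -> 'I_K}} := [ffun c => [ffun v => G v c]].

Lemma coloring_ofK : cancel coloring_of color_classes.
Proof. by move=> h; apply/ffunP => c; apply/ffunP => v; rewrite !ffunE. Qed.

Lemma color_classesK : cancel color_classes coloring_of.
Proof. by move=> G; apply/ffunP => v; apply/ffunP => c; rewrite !ffunE. Qed.

Definition marked_decomp (h : {ffun 'I_q -> {ffun 'I_n -> 'I_K}}) : bool :=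
  [forall c, marked_indep E Vsp (box_val (h c))] &&
  ((\sum_(c < q) mnm_of (box_val (h c)))%MM == mnm_of m).

Lemma is_marked_coloring_of h :
  is_marked_coloring E Vsp (coloring_of h) = marked_decomp h.
Proof.
have sumE : [forall v, (\sum_(c < q) (coloring_of h v c : nat))%N == m v] =
            ((\sum_(c < q) mnm_of (box_val (h c)))%MM == mnm_of m).
  apply/forallP/eqP => [hm|/mnmP hm v].
    apply/mnmP => v; rewrite mnm_sumE mnmE -(eqP (hm v)).
    by apply: eq_bigr => c _; rewrite mnmE !ffunE.
  by move: (hm v); rewrite mnm_sumE mnmE => <-; apply/eqP/eq_bigr => c _; rewrite mnmE !ffunE.
have spE : [forall v, (v \notin Vsp) ==> [forall c, (coloring_of h v c <= 1)%N]] =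
           [forall c, [forall v, (v \notin Vsp) ==> (box_val (h c) v <= 1)%N]].
  apply/forallP/forallP => hsp x.
    apply/forallP => v; apply/implyP => vsp.
    by move: (hsp v); rewrite vsp => /forallP/(_ x); rewrite !ffunE.
  apply/implyP => vsp; apply/forallP => c.
  by move: (hsp c) => /forallP/(_ x); rewrite vsp !ffunE.
have edgeE : [forall e in E, ~~ [exists c, [forall v in e, (0 < coloring_of h v c)%N]]] =
             [forall c, [forall e in E, ~~ (e \subset [set v | (0 < box_val (h c) v)%N])]].
  apply/forall_inP/forallP => [he c|he e eE].
    apply/forall_inP => e eE; apply/negP => /subsetP ec.
    case/negP: (he e eE); apply/existsP; exists c; apply/forall_inP => v ve.
    by have := ec v ve; rewrite inE !ffunE.
  apply/negP => /existsP [c /forall_inP ec]; move/forall_inP/(_ e eE)/negP: (he c); apply.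
  by apply/subsetP => v ve; rewrite inE ffunE; have := ec v ve; rewrite !ffunE.
have indepE : [forall c, marked_indep E Vsp (box_val (h c))] =
    [forall c, [forall e in E, ~~ (e \subset [set v | (0 < box_val (h c) v)%N])]] &&
    [forall c, [forall v, (v \notin Vsp) ==> (box_val (h c) v <= 1)%N]].
  apply/forallP/andP => [hi|[/forallP he /forallP hv] c]; last by apply/andP.
  by split; apply/forallP => c; case/andP: (hi c).
rewrite /is_marked_coloring sumE spE edgeE /marked_decomp indepE.
by rewrite [RHS]andbC andbA andbAC.
Qed.

Lemma n_marked_colorings_decomp :
  n_marked_colorings E Vsp m q = #|[set h | marked_decomp h]|.
Proof.
rewrite /n_marked_colorings.
have -> : [set G | is_marked_coloring E Vsp (m:=m) (q:=q) G] =
          coloring_of @: [set h | marked_decomp h].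
  apply/setP => G; rewrite inE; apply/idP/imsetP => [GE|[h hE ->]].
    exists (color_classes G); rewrite ?color_classesK //.
    by rewrite inE -is_marked_coloring_of color_classesK.
  by rewrite is_marked_coloring_of; rewrite inE in hE.
by rewrite card_imset //; apply: can_inj coloring_ofK.
Qed.

Lemma prod_Imark (x : 'I_q -> midx n) :
  \prod_(c < q) Imark E Vsp (x c) = [forall c, marked_indep E Vsp (x c)]%:R.
Proof.
case: (boolP [forall c, _]) => [/forallP xi|/forallPn [c xc]].
  by apply: big1 => c _; rewrite /Imark xi.
by rewrite (bigD1 c) //= /Imark (negbTE xc) mul0r.
Qed.

Lemma spow_Imark_colorings : spow (Imark E Vsp) q m = (n_marked_colorings E Vsp m q)%:R.
Proof.
rewrite spow_coef_trunc -[q in _ ^+ q]card_ord -prodr_const bigA_distr_bigA raddf_sum /=.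
rewrite (eq_bigr (fun h => (marked_decomp h)%:R)) => [|h _]; last first.
  rewrite prod_scaleX mcoeffZ mcoeffX prod_Imark /marked_decomp.
  by case: [forall c, _]; case: eqP; rewrite ?mulr1 ?mulr0.
rewrite n_marked_colorings_decomp -sum1_card natr_sum [RHS]big_mkcond /=.
by apply: eq_bigr => h _; rewrite inE; case: marked_decomp.
Qed.

End Colorings.

Section MarkedPolynomial.
Variables (n : nat) (E : {set {set 'I_n}}) (Vsp : {set 'I_n}).
Hypothesis edges_nonempty : forall e, e \in E -> e != set0.
Variable m : midx n.

Let I := Imark E Vsp.
Let g : series n := fun a => sone a - I a.
Let G := trunc m g.
Let N := (Defs.mdeg m).+1.
Let c j := (G ^+ j)@_(mnm_of m).

Lemma Imark_mzero z : mzero z -> I z = 1.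
Proof.
move/forallP => z0; rewrite /I /Imark /marked_indep.
have -> : [forall e in E, ~~ (e \subset [set v | (0 < z v)%N])].
  apply/forall_inP => e eE; apply/negP => ez; case/eqP: (edges_nonempty eE).
  apply/eqP; rewrite -subset0 (subset_trans ez) //.
  by apply/subsetP => v; rewrite inE (eqP (z0 v)).
suff -> : [forall v, (v \notin Vsp) ==> (z v <= 1)%N] by [].
by apply/forallP => v; rewrite (eqP (z0 v)) implybT.
Qed.

Lemma sone_subImark_mzero z : mzero z -> g z = 0.
Proof. by move=> z0; rewrite /g Imark_mzero // /sone z0 subrr. Qed.

Lemma coef_pow_trunc_eq0 j : (N <= j)%N -> c j = 0.
Proof.
move=> Nj; rewrite /c -spow_coef_trunc; exact: spow_eq0_lt_mdeg sone_subImark_mzero _ _ Nj.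
Qed.

Lemma coef_horner_alg p : (horner_alg G p)@_(mnm_of m) = \sum_(j < N) p`_j * c j.
Proof.
pose F j := p`_j * c j.
rewrite horner_algE raddf_sum /= (eq_bigr (fun j : 'I_(size p) => F j)) => [|j _]; last first.
  by rewrite mcoeffZ.
rewrite (@sumr_ord_widen0 _ F _ (maxn (size p) N)) ?leq_maxl // => [|j /andP[pj _]].
  rewrite [RHS](@sumr_ord_widen0 _ F _ (maxn (size p) N)) ?leq_maxr // => j /andP[Nj _].
  by rewrite /F coef_pow_trunc_eq0 ?mulr0.
by rewrite /F nth_default ?mul0r.
Qed.

Lemma trunc_Imark : eq_upto m (trunc m I) (1 - G).
Proof.
apply: eq_upto_trunc => k km.
by rewrite mcoeffB -(trunc_sone km) !mcoeff_trunc // /g opprB addrC subrK.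
Qed.

Lemma spow_Imark_expand q : spow I q m = \sum_(j < N) c j * ((-1) ^+ j * 'C(q, j)%:R).
Proof.
rewrite spow_coef_trunc (eq_uptoX q trunc_Imark (mnm_le_mnm_of m)).
have -> : (1 - G) ^+ q = horner_alg G ((1 - 'X) ^+ q).
  by rewrite rmorphXn rmorphB rmorph1 /= horner_algX.
by rewrite coef_horner_alg; apply: eq_bigr => j _; rewrite coef_1subX_exp mulrC.
Qed.

Lemma trunc_sinv_Imark : eq_upto m (trunc m (sinv I)) (horner_alg G (geom_poly N)).
Proof.
apply: eq_upto_trunc => k km.
rewrite rmorph_sum raddf_sum /= (eq_bigr (fun j : 'I_N => spow g j (midx_of k))) => [|j _].
  apply: esym; apply: (@sumr_ord_widen0 _ (fun j => spow g j (midx_of k))) => [|j /andP[kj _]].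
    by rewrite ltnS; apply: leq_sum => i _; rewrite ffunE.
  exact: spow_eq0_lt_mdeg sone_subImark_mzero _ _ kj.
by rewrite rmorphXn /= horner_algX -(trunc_spow _ _ km) mcoeff_trunc.
Qed.

Lemma spow_sinv_Imark_expand l : spow (sinv I) l.+1 m = \sum_(j < N) c j * 'C(l + j, j)%:R.
Proof.
rewrite spow_coef_trunc (eq_uptoX _ trunc_sinv_Imark (mnm_le_mnm_of m)) -rmorphXn.
by rewrite coef_horner_alg; apply: eq_bigr => j _; rewrite coef_geom_poly_exp // mulrC.
Qed.

Definition marked_poly : {poly rat} := \sum_(j < N) (c j * (-1) ^+ j) *: binpoly j.

Lemma horner_marked_poly x : marked_poly.[x] = \sum_(j < N) c j * (-1) ^+ j * (binpoly j).[x].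
Proof. by rewrite horner_sum; apply: eq_bigr => j _; rewrite hornerZ. Qed.

Lemma marked_poly_nat q : marked_poly.[q%:R] = spow I q m.
Proof.
rewrite horner_marked_poly spow_Imark_expand.
by apply: eq_bigr => j _; rewrite binpoly_nat mulrA.
Qed.

Lemma marked_poly_neg l : marked_poly.[- (l.+1)%:R] = spow (sinv I) l.+1 m.
Proof.
rewrite horner_marked_poly spow_sinv_Imark_expand; apply: eq_bigr => j _.
by rewrite binpoly_neg mulrA -(mulrA (c j)) -exprMn mulrNN mulr1 expr1n mulr1.
Qed.

End MarkedPolynomial.

Theorem theorem4p3 (n : nat) (E : {set {set 'I_n}}) (Vsp : {set 'I_n}) :
  (forall e, e \in E -> e != set0) ->
  forall m : midx n,
    exists P : {poly rat},
      (forall q : nat, (0 < q)%N -> P.[q%:R] = (n_marked_colorings E Vsp m q)%:R) /\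
      (forall q : int, sipow (Imark E Vsp) q m = P.[q%:~R]).
Proof.
move=> edges_nonempty m; exists (marked_poly E Vsp m).
split=> [q _|[q|l]]; rewrite ?NegzE ?mulrNz /=.
- by rewrite marked_poly_nat // spow_Imark_colorings.
- by rewrite marked_poly_nat.
- by rewrite marked_poly_neg.
Qed.
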